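(* Let $N,M$ be integers with $0<M<N/2$. The maximal elements of the poset $\mathbf{Str}(N,M)$ are exactly the strings of dimension $N-2M$.
   Context: A circular symbol string of length $N$ is $s=s_1\cdots s_N$ with each $s_i\in\{0,1,X\}$, indices read cyclically modulo $N$; $0,1$ are called bits. A block of $s$ is a maximal cyclic run of consecutive equal symbols. $s$ is a circular cellular string of rank $M$ if it has exactly $M$ blocks of symbol $0$, exactly $M$ blocks of symbol $1$, and every block of symbol $X$ is cyclically preceded and followed by blocks of different bits (one of symbol $0$ and one of symbol $1$). Its dimension is its number of symbols $X$. $\mathbf{Str}(N,M)$ is the set of such strings, partially ordered by $s'<s$ iff $s$ is obtained from $s'$ by replacing some (at least one) of the bits of $s'$ by $X$. *)

From HB Require Import structures.
From mathcomp Require Import all_boot.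
Set Implicit Arguments. Unset Strict Implicit. Unset Printing Implicit Defensive.

Inductive sym := Z0 | Z1 | SX.

Definition sym_eqb (a b : sym) : bool :=
  match a, b with
  | Z0, Z0 | Z1, Z1 | SX, SX => true
  | _, _ => false
  end.

Lemma sym_eqP : Equality.axiom sym_eqb.
Proof. by case; case; constructor. Qed.

HB.instance Definition _ := hasDecEq.Build sym sym_eqP.

Definition is_bit (c : sym) : bool := c != SX.

(* Circular strings are sequences; position n is read modulo the length. *)
Definition sat (s : seq sym) (n : nat) : sym := nth SX s (n %% size s).

(* The cyclic interval of positions {i, i+1, ..., i+k-1} (mod N). *)
Definition cint (N : nat) (i : 'I_N) (k : nat) : {set 'I_N} :=
  [set j : 'I_N | (j + N - i) %% N < k].

Definition is_cint (N : nat) (S : {set 'I_N}) : bool :=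
  [exists i : 'I_N, exists k : 'I_N.+1, (0 < k) && (S == cint i k)].

Definition mono (N : nat) (s : seq sym) (c : sym) (S : {set 'I_N}) : bool :=
  [forall j in S, sat s j == c].

Definition is_block (N : nat) (s : seq sym) (c : sym) (S : {set 'I_N}) : bool :=
  [&& is_cint S, mono s c S &
      [forall S' : {set 'I_N},
         [&& is_cint S', mono s c S' & S \subset S'] ==> (S' == S)]].

Definition nblocks (N : nat) (s : seq sym) (c : sym) : nat :=
  #|[set S : {set 'I_N} | is_block s c S]|.

Definition X_cond (N : nat) (s : seq sym) : bool :=
  [forall i : 'I_N, forall k : 'I_N.+1,
     ((0 < k) && is_block s SX (cint i k)) ==>
     [&& is_bit (sat s (i + N - 1)), is_bit (sat s (i + k)) &
         sat s (i + N - 1) != sat s (i + k)]].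

Definition cellular (N M : nat) (s : seq sym) : Prop :=
  [/\ size s = N, nblocks N s Z0 = M, nblocks N s Z1 = M & X_cond N s].

Definition dimension (s : seq sym) : nat := count (pred1 SX) s.

Definition str_lt (s' s : seq sym) : Prop :=
  [/\ size s' = size s,
      all2 (fun a b => (a == b) || (is_bit a && (b == SX))) s' s & s' != s].

Definition maximal_in_Str (N M : nat) (s : seq sym) : Prop :=
  cellular N M s /\ forall t, cellular N M t -> ~ str_lt s t.

(* For a bit c, the c-blocks of a circular string that is not constantly c
   correspond to their first positions, so c occurs at least M times when s has
   M blocks of c; hence dim s = N - #0 - #1 <= N - 2M.  Replacing bits by X
   increases the dimension, so strings of dimension N - 2M are maximal.
   Conversely, if dim s < N - 2M, some bit c occurs at a position that does not
   start a c-block, so some c-block has length at least 2.  Replacing its last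
   symbol by X keeps the block starts of both bits, and the new X either forms
   an X-block between c and the other bit or joins the X-block that followed,
   whose left neighbour is still c; so the result is a larger cellular string. *)

From mathcomp Require Import all_boot zify.
Set Implicit Arguments. Unset Strict Implicit. Unset Printing Implicit Defensive.

Lemma ord_gt0 N (i : 'I_N) : 0 < N.
Proof. exact: leq_ltn_trans (leq0n i) (ltn_ord i). Qed.

Section CyclicIntervals.

Variable N : nat.

Definition cdist (i j : nat) : nat := (j + N - i) %% N.

Lemma cdist_ltn i j : 0 < N -> cdist i j < N.
Proof. exact: ltn_pmod. Qed.

Lemma addn_cdist i j : i < N -> j < N -> (i + cdist i j) %% N = j.
Proof.
move=> ltiN ltjN; rewrite /cdist modnDmr subnKC; last lia.
by rewrite modnDr modn_small.
Qed.

Lemma cdist_addn i m : i < N -> m < N -> cdist i ((i + m) %% N) = m.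
Proof.
move=> ltiN ltmN; have N_gt0 : 0 < N by lia.
have ltiN_mod := ltn_pmod (i + m) N_gt0.
apply/eqP; rewrite -(modn_small ltmN) -(eqn_modDl i) modnDmr /cdist.
by rewrite subnKC ?modnDr ?modn_mod //; lia.
Qed.

Lemma cdist_mod i j m : i < N -> m < N -> (i + m) %% N = j -> cdist i j = m.
Proof. by move=> ltiN ltmN <-; rewrite cdist_addn. Qed.

Lemma addn_mod_neq i e : i < N -> 0 < e < N -> (i + e) %% N != i.
Proof.
move=> ltiN /andP [e_gt0 lteN]; apply/eqP => eq_mod.
have := cdist_mod ltiN lteN eq_mod; rewrite /cdist addKn modnn => e0.
by rewrite -e0 in e_gt0.
Qed.

Lemma mem_cint (i j : 'I_N) k : (j \in cint i k) = (cdist i j < k).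
Proof. by rewrite inE. Qed.

Lemma mem_cint_head (i : 'I_N) k : 0 < k -> i \in cint i k.
Proof.
by move=> k_gt0; rewrite mem_cint (@cdist_mod _ _ 0) ?addn0 ?modn_small ?(ord_gt0 i).
Qed.

Lemma subset_cint (i : 'I_N) k k' : k <= k' -> cint i k \subset cint i k'.
Proof. by move=> lekk'; apply/subsetP => j; rewrite !mem_cint => /leq_trans; apply. Qed.

Lemma cint_is_cint (i : 'I_N) k : 0 < k -> k <= N -> is_cint (cint i k).
Proof.
move=> k_gt0 lekN; have ltkN1 : k < N.+1 by [].
by apply/existsP; exists i; apply/existsP; exists (Ordinal ltkN1); rewrite k_gt0 /=.
Qed.

Lemma cdist_ord_pred (i j : 'I_N) : cdist i j < N.-1 ->
  cdist (ord_pred i) j = (cdist i j).+1.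
Proof.
move=> lt_d; have N_gt0 := ord_gt0 i.
apply: cdist_mod => //; first lia.
rewrite /= modnDml (_ : _ + _ = i + cdist i j + N); last lia.
by rewrite modnDr addn_cdist.
Qed.

Lemma card_cint (i : 'I_N) k : k <= N -> #|cint i k| = k.
Proof.
move=> lekN; have N_gt0 := ord_gt0 i.
pose f (m : 'I_k) : 'I_N := Ordinal (ltn_pmod (i + m) N_gt0).
have -> : cint i k = f @: setT.
  apply/setP => j; rewrite mem_cint; apply/idP/imsetP => [lt_d | [m _ ->]].
    by exists (Ordinal lt_d) => //; apply: val_inj; rewrite /= addn_cdist.
  by rewrite /= cdist_addn //; apply: leq_trans lekN.
rewrite card_imset ?cardsT ?card_ord // => m m' /(congr1 val) /= eq_mod.
apply: val_inj; rewrite -[val m](@cdist_addn i) ?eq_mod ?cdist_addn //.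
all: exact: leq_trans (ltn_ord _) lekN.
Qed.

End CyclicIntervals.

Section Runs.

Variables (N : nat) (s : seq sym) (c : sym).
Hypotheses (size_s : size s = N) (N_gt0 : 0 < N).

Lemma eq_sat_mod a b : a = b %[mod N] -> sat s a = sat s b.
Proof. by rewrite /sat size_s => ->. Qed.

Lemma sat_mod a : sat s (a %% N) = sat s a.
Proof. by apply: eq_sat_mod; rewrite modn_mod. Qed.

Lemma sat_pred_mod a : sat s (a %% N + N - 1) = sat s (a + N - 1).
Proof. by apply: eq_sat_mod; rewrite -!addnBA // modnDml. Qed.

Lemma sat_succ_mod a : sat s (a %% N + 1) = sat s (a + 1).
Proof. by apply: eq_sat_mod; rewrite modnDml. Qed.

Lemma sat_pred_addS i m : sat s (i + N - 1 + m.+1) = sat s (i + m).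
Proof. by apply: eq_sat_mod; rewrite (_ : _ + _ = i + m + N) ?modnDr //; lia. Qed.

Lemma sat_addn_cdist (i j : 'I_N) : sat s (i + cdist N i j) = sat s j.
Proof. by rewrite -sat_mod addn_cdist. Qed.

Lemma mono_cintP (i : 'I_N) k : k <= N ->
  reflect (forall m, m < k -> sat s (i + m) = c) (mono s c (cint i k)).
Proof.
move=> lekN; apply: (iffP forall_inP) => [mono_ik m ltmk | all_c j].
- have ltim_N : (i + m) %% N < N by rewrite ltn_pmod.
  have := mono_ik (Ordinal ltim_N); rewrite mem_cint /= cdist_addn //; last lia.
  by move=> /(_ ltmk) /eqP; rewrite sat_mod.
- by rewrite mem_cint -(sat_addn_cdist i) => /all_c ->.
Qed.

Lemma sat_const i : (forall m, m < N -> sat s (i + m) = c) -> forall j, sat s j = c.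
Proof.
move=> all_c j; rewrite -sat_mod.
have ltiN : i %% N < N by rewrite ltn_pmod.
have ltjN : j %% N < N by rewrite ltn_pmod.
by rewrite -(addn_cdist ltiN ltjN) modnDml sat_mod all_c ?cdist_ltn.
Qed.

Definition max_run (i k : nat) : Prop :=
  [/\ sat s (i + N - 1) != c, forall m, m < k -> sat s (i + m) = c
    & sat s (i + k) != c].

Lemma max_run_uniq i k k' : max_run i k -> max_run i k' -> k = k'.
Proof.
move=> [_ ci ck] [_ ci' ck']; case: (ltngtP k k') => // [/ci'|/ci] eq_c.
- by rewrite eq_c eqxx in ck.
- by rewrite eq_c eqxx in ck'.
Qed.

Lemma run_head_uniq (i i' : 'I_N) k' : sat s (i + N - 1) != c -> k' <= N ->
  (forall m, m < k' -> sat s (i' + m) = c) -> i \in cint i' k' -> i = i'.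
Proof.
move=> pred_i lek'N ci'; rewrite mem_cint.
have := addn_cdist (ltn_ord i') (ltn_ord i).
case: (cdist N i' i) => [|d] i_mod lt_d.
  by apply: val_inj; rewrite /= -i_mod addn0 modn_small.
have := ci' d (ltnW lt_d); rewrite (_ : sat s (i' + d) = sat s (i + N - 1)).
  by move/eqP; rewrite (negbTE pred_i).
apply/eq_sat_mod/eqP; rewrite -(eqn_modDr 1) addn1 -addnS i_mod.
by rewrite (_ : _ + 1 = i + N) ?modnDr ?modn_small //; lia.
Qed.

Lemma sat_ord_pred (i : 'I_N) : sat s (ord_pred i) = sat s (i + N - 1).
Proof. by rewrite /= sat_mod subn1. Qed.

Lemma max_run_block (i : 'I_N) k : 0 < k -> k <= N ->
  max_run i k -> is_block s c (cint i k).
Proof.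
move=> k_gt0 lekN [pred_i ci end_c]; rewrite /is_block cint_is_cint //.
rewrite (introT (mono_cintP _ lekN) ci) /=; apply/forallP => S'.
apply/implyP => /and3P [/existsP [i' /existsP [k' /andP [_ /eqP ->]]]].
have lek'N : k' <= N by rewrite -ltnS.
move=> /(mono_cintP _ lek'N) ci' sub.
have eq_ii' : i = i'.
  by apply: run_head_uniq pred_i lek'N ci' _; rewrite (subsetP sub) ?mem_cint_head.
subst i'; have lek'k : k' <= k.
  by rewrite leqNgt; apply: contra end_c => /ci' ->.
by rewrite eqEsubset subset_cint ?sub.
Qed.

Hypothesis not_const : exists j, sat s j != c.

Lemma block_max_run (i : 'I_N) k : 0 < k -> k <= N ->
  is_block s c (cint i k) -> max_run i k.
Proof.
move=> k_gt0 lekN /and3P [_ /(mono_cintP _ lekN) ci /forallP maximal].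
have ltkN : k < N.
  rewrite ltn_neqAle lekN andbT; apply/eqP => eq_kN; subst k.
  by case: not_const => j; rewrite (sat_const ci) eqxx.
have not_grow (i' : 'I_N) : (forall m, m < k.+1 -> sat s (i' + m) = c) ->
    ~ cint i k \subset cint i' k.+1.
  move=> ci' sub; have := maximal (cint i' k.+1).
  rewrite cint_is_cint // sub (introT (mono_cintP _ ltkN) ci') => /implyP /(_ isT) /eqP eq_cint.
  by have := card_cint i' ltkN; rewrite eq_cint (card_cint i (ltnW ltkN)) => /n_Sn.
split=> //; apply/negP => /eqP ends_c; last first.
  apply: (not_grow i); last exact: subset_cint.
  by move=> m; rewrite ltnS leq_eqVlt => /orP [/eqP -> | /ci].
apply: (not_grow (ord_pred i)).
  case=> [|m] ltmk; first by rewrite addn0 sat_ord_pred.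
  by rewrite (@eq_sat_mod _ (i + N - 1 + m.+1)) ?sat_pred_addS ?ci //= modnDml subn1.
apply/subsetP => j; rewrite !mem_cint => lt_d.
by rewrite cdist_ord_pred //; lia.
Qed.

Definition run_len (i : nat) : nat := find (fun m => sat s (i + m) != c) (iota 0 N).

Lemma has_run_end i : has (fun m => sat s (i + m) != c) (iota 0 N).
Proof.
case: not_const => j not_c; apply/hasP.
have ltiN : i %% N < N by rewrite ltn_pmod.
have ltjN : j %% N < N by rewrite ltn_pmod.
exists (cdist N (i %% N) (j %% N)); first by rewrite mem_iota cdist_ltn.
by rewrite -sat_mod -modnDml addn_cdist // sat_mod.
Qed.

Lemma run_len_ltn i : run_len i < N.
Proof. by have := has_run_end i; rewrite has_find size_iota. Qed.

Lemma sat_run_len i m : m < run_len i -> sat s (i + m) = c.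
Proof.
move=> lt_m; have := before_find 0 lt_m.
rewrite nth_iota ?add0n; last exact: ltn_trans (run_len_ltn i).
by move/negbFE/eqP.
Qed.

Lemma sat_run_end i : sat s (i + run_len i) != c.
Proof. by have := nth_find 0 (has_run_end i); rewrite nth_iota ?add0n ?run_len_ltn. Qed.

Lemma run_len_gt0 i : sat s i = c -> 0 < run_len i.
Proof.
move=> ci; rewrite lt0n; apply/eqP => len0.
by have := sat_run_end i; rewrite len0 addn0 ci eqxx.
Qed.

Definition run_starts : {set 'I_N} :=
  [set i : 'I_N | (sat s i == c) && (sat s (i + N - 1) != c)].

Lemma max_run_len (i : 'I_N) : i \in run_starts -> max_run i (run_len i).
Proof. by rewrite inE => /andP [_ pred_i]; split; rewrite ?sat_run_end //; apply: sat_run_len. Qed.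

Lemma nblocks_run_starts : nblocks N s c = #|run_starts|.
Proof.
have start_c (i : 'I_N) : i \in run_starts -> sat s i = c by rewrite inE => /andP [/eqP].
have blocksE : [set S | is_block s c S] = [set cint i (run_len i) | i in run_starts].
  apply/setP => S; rewrite inE; apply/idP/imsetP => [blockS | [i start_i ->]].
    have := blockS => /and3P [/existsP [i /existsP [k /andP [k_gt0 /eqP defS]]] _ _].
    rewrite defS in blockS *; have lekN : k <= N by rewrite -ltnS.
    have run_ik := block_max_run k_gt0 lekN blockS.
    have start_i : i \in run_starts.
      by case: run_ik => pred_i ci _; rewrite inE pred_i -(addn0 i) ci ?eqxx.
    by exists i => //; rewrite (max_run_uniq run_ik (max_run_len start_i)).
  apply: max_run_block (max_run_len start_i); first by rewrite run_len_gt0 ?start_c.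
  exact: ltnW (run_len_ltn i).
rewrite /nblocks blocksE card_in_imset // => i i' start_i start_i' eq_cint.
have [pred_i _ _] := max_run_len start_i; have [_ ci' _] := max_run_len start_i'.
apply: run_head_uniq pred_i (ltnW (run_len_ltn i')) ci' _.
by rewrite -eq_cint mem_cint_head // run_len_gt0 ?start_c.
Qed.

Lemma exists_run_last_pair i : sat s i = c -> sat s (i + 1) = c ->
  exists p : 'I_N, [/\ sat s (p + N - 1) = c, sat s p = c & sat s (p + 1) != c].
Proof.
move=> ci ci1; have len_gt1 : 1 < run_len i.
  have := sat_run_end i; case: (run_len i) (run_len_gt0 ci) => [|[|L]] //= _.
  by rewrite ci1 eqxx.
set L := run_len i in len_gt1 *.
have ltpN : (i + L.-1) %% N < N by rewrite ltn_pmod.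
exists (Ordinal ltpN); rewrite /= sat_pred_mod sat_mod sat_succ_mod; split.
- rewrite (_ : i + L.-1 + N - 1 = i + N - 1 + L.-2.+1); last lia.
  by rewrite sat_pred_addS sat_run_len //; lia.
- by rewrite sat_run_len //; lia.
- by rewrite (_ : i + L.-1 + 1 = i + L) ?sat_run_end //; lia.
Qed.

End Runs.

Lemma X_condP N s : size s = N -> 0 < N -> (exists j, sat s j != SX) ->
  reflect (forall (i : 'I_N) k, 0 < k -> k <= N -> max_run N s SX i k ->
             sat s (i + N - 1) != sat s (i + k))
          (X_cond N s).
Proof.
move=> size_s N_gt0 not_X; apply: (iffP forallP) => [X_s i k k_gt0 lekN run_ik | X_s i].
  have ltkN1 : k < N.+1 by [].
  have /forallP /(_ (Ordinal ltkN1)) /implyP := X_s i.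
  by rewrite k_gt0 max_run_block // => /(_ isT) /and3P [].
apply/forallP => k; apply/implyP => /andP [k_gt0 block_ik].
have lekN : k <= N by rewrite -ltnS.
have run_ik := block_max_run size_s N_gt0 not_X k_gt0 lekN block_ik.
by case: (run_ik) => pred_i _ end_i; rewrite /is_bit pred_i end_i X_s.
Qed.

Definition occurrences N s c : {set 'I_N} := [set j : 'I_N | sat s j == c].

Lemma count_occurrences N s c : size s = N -> count (pred1 c) s = #|occurrences N s c|.
Proof.
move=> <-; rewrite cardE /enum_mem size_filter -enumT -[in LHS](mkseq_nth SX s).
rewrite /mkseq count_map -val_enum_ord count_map; apply: eq_count => j.
by rewrite !inE /sat modn_small.
Qed.

Lemma dimension_count_bits s :
  dimension s + count (pred1 Z0) s + count (pred1 Z1) s = size s.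
Proof. by elim: s => //= a s IH; case: a; rewrite /= -IH /dimension; lia. Qed.

Lemma run_starts_sub N s c : run_starts N s c \subset occurrences N s c.
Proof. by apply/subsetP => j; rewrite !inE => /andP []. Qed.

Lemma exists_sat_nblocks N s c : 0 < nblocks N s c -> exists j : 'I_N, sat s j = c.
Proof.
rewrite card_gt0 => /set0Pn [_ /[!inE] /and3P [/existsP [i /existsP [k /andP [k_gt0 /eqP ->]]]]].
by move=> /forall_inP /(_ i (mem_cint_head i k_gt0)) /eqP ci _; exists i.
Qed.

Lemma cellular_not_const N M s c : 0 < M -> cellular N M s ->
  exists j : 'I_N, sat s j != c.
Proof.
move=> M_gt0 [_ nb0 nb1 _].
have [j0 sat_j0] : exists j : 'I_N, sat s j = Z0 by apply: exists_sat_nblocks; rewrite nb0.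
have [j1 sat_j1] : exists j : 'I_N, sat s j = Z1 by apply: exists_sat_nblocks; rewrite nb1.
by case: c; [exists j1; rewrite sat_j1 | exists j0; rewrite sat_j0 | exists j0; rewrite sat_j0].
Qed.

Lemma card_run_starts_cellular N M s c : 0 < M -> cellular N M s -> c != SX ->
  #|run_starts N s c| = M.
Proof.
move=> M_gt0 cell_s c_bit; have [size_s nb0 nb1 _] := cell_s.
have [j not_c] := cellular_not_const c M_gt0 cell_s.
rewrite -(nblocks_run_starts size_s (ord_gt0 j)); last by exists j.
by case: c c_bit {not_c}.
Qed.

Lemma dimension_cellular N M s : 0 < M -> cellular N M s -> dimension s + M.*2 <= N.
Proof.
move=> M_gt0 cell_s; have [size_s _ _ _] := cell_s.
have := dimension_count_bits s; rewrite size_s !(count_occurrences _ size_s) => <-.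
have le_M (c : sym) : c != SX -> M <= #|occurrences N s c|.
  move=> c_bit; rewrite -(card_run_starts_cellular M_gt0 cell_s c_bit).
  exact/subset_leq_card/run_starts_sub.
by rewrite -addnn -!addnA leq_add2l leq_add ?le_M.
Qed.

Lemma dimension_str_lt s t : str_lt s t -> dimension s < dimension t.
Proof.
case=> _ + neq_st; rewrite /dimension.
elim: s t neq_st => [|a s IH] [|b t] //= neq_st /andP [le_ab le_st].
have le_count : count (pred1 SX) s <= count (pred1 SX) t.
  by case: (eqVneq s t) => [-> // | neq]; apply/ltnW/IH.
case/orP: le_ab => [/eqP eq_ab | /andP [a_bit /eqP ->]].
  subst b; rewrite ltn_add2l; apply: IH le_st; by apply: contraNneq neq_st => ->.
by case: a a_bit {neq_st} => //= _; rewrite add0n add1n ltnS.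
Qed.

Section ReplaceByX.

Variables (N : nat) (s : seq sym) (c : sym) (p : 'I_N).
Hypotheses (size_s : size s = N) (c_bit : c != SX).
Hypotheses (pred_p : sat s (p + N - 1) = c) (sat_p : sat s p = c)
  (succ_p : sat s (p + 1) != c).

Local Notation t := (set_nth SX s p SX).

Let N_gt0 : 0 < N := ord_gt0 p.

Lemma size_set_X : size t = N.
Proof. by rewrite size_set_nth size_s; apply/maxn_idPr/ltn_ord. Qed.

Lemma sat_set_X n : sat t n = if n %% N == p then SX else sat s n.
Proof. by rewrite /sat size_set_X nth_set_nth /= size_s. Qed.

Lemma sat_set_X_bit n : sat t n != SX -> sat t n = sat s n.
Proof. by rewrite sat_set_X; case: ifP => //; rewrite eqxx. Qed.

Lemma pred_p_neq : (p + N - 1) %% N != p.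
Proof.
have N_gt1 : 1 < N.
  rewrite ltn_neqAle N_gt0 andbT eq_sym; apply: contraNneq succ_p => N1.
  rewrite -sat_p; apply/eqP/(eq_sat_mod size_s).
  by move: (p : nat) => q; rewrite N1 !modn1.
by rewrite -addnBA // addn_mod_neq //; lia.
Qed.

Lemma sat_set_X_pred : sat t (p + N - 1) = c.
Proof. by rewrite sat_set_X (negbTE pred_p_neq). Qed.

Lemma run_starts_set_X b : b != SX -> run_starts N t b = run_starts N s b.
Proof.
move=> b_bit; apply/setP => j; rewrite !inE !sat_set_X modn_small //.
case: (eqVneq (j : nat) p) => [-> | _].
  by rewrite (negbTE pred_p_neq) eq_sym (negbTE b_bit) sat_p pred_p; case: (c == b).
case: (eqVneq ((j + N - 1) %% N) p) => [pred_j | _] //.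
have sat_pred_j : sat s (j + N - 1) = c by rewrite -sat_p -(sat_mod size_s) pred_j.
have sat_j : sat s j = sat s (p + 1).
  apply: (eq_sat_mod size_s); rewrite -pred_j modnDml.
  by rewrite (_ : j + N - 1 + 1 = j + N) ?modnDr //; lia.
rewrite sat_pred_j (eq_sym SX) b_bit andbT; case: eqP => // <-.
by rewrite sat_j eq_sym succ_p.
Qed.

Lemma sat_ordS_addn m : sat s (ordS p + m) = sat s (p + m.+1).
Proof. by apply: (eq_sat_mod size_s); rewrite /= modnDml addSn addnS. Qed.

Lemma sat_ordS_pred : sat s (ordS p + N - 1) = c.
Proof.
rewrite (sat_pred_mod size_s N_gt0) (_ : p.+1 + N - 1 = p + N); last lia.
by rewrite (eq_sat_mod size_s (modnDr p N)) sat_p.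
Qed.

Lemma max_run_set_X_avoid (i : 'I_N) k : k <= N -> p \notin cint i k ->
  max_run N t SX i k -> max_run N s SX i k.
Proof.
move=> lekN p_out [pred_i Xi end_i]; split; rewrite -?sat_set_X_bit //.
move=> m ltmk; have := Xi m ltmk; rewrite sat_set_X; case: eqP => // im_p.
case/negP: p_out; rewrite mem_cint (cdist_mod (ltn_ord i) _ im_p) //.
exact: leq_trans ltmk lekN.
Qed.

Lemma max_run_set_X_succ k : 0 < k -> k < N ->
  max_run N t SX p k.+1 -> max_run N s SX (ordS p) k.
Proof.
move=> k_gt0 ltkN [_ Xp end_p]; split.
- by rewrite sat_ordS_pred.
- move=> m ltmk; rewrite sat_ordS_addn; have := Xp m.+1 ltmk.
  rewrite sat_set_X (negbTE (addn_mod_neq (ltn_ord p) _)) //=.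
  exact: leq_ltn_trans ltmk ltkN.
- by rewrite sat_ordS_addn -sat_set_X_bit.
Qed.

Lemma X_cond_set_X : X_cond N s -> X_cond N t.
Proof.
have not_X_s : exists j, sat s j != SX by exists (nat_of_ord p); rewrite sat_p.
have not_X_t : exists j, sat t j != SX by exists (p + N - 1); rewrite sat_set_X_pred.
move=> /(X_condP size_s N_gt0 not_X_s) X_s.
apply/(X_condP size_set_X N_gt0 not_X_t) => i k k_gt0 lekN run_ik.
have [pred_i Xi end_i] := run_ik.
rewrite (sat_set_X_bit pred_i) (sat_set_X_bit end_i).
case: (boolP (p \in cint i k)) => [p_in | p_out]; last first.
  exact: X_s k_gt0 lekN (max_run_set_X_avoid lekN p_out run_ik).
have eq_pi : p = i.
  by apply: (run_head_uniq size_set_X N_gt0) lekN Xi p_in; rewrite sat_set_X_pred.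
subst i; rewrite pred_p; case: k k_gt0 lekN run_ik {Xi end_i p_in} => [|[|k]] // _ lekN run_pk.
  by rewrite eq_sym.
have := X_s (ordS p) k.+1 isT (ltnW lekN) (max_run_set_X_succ (ltn0Sn k) lekN run_pk).
by rewrite sat_ordS_pred sat_ordS_addn.
Qed.

Lemma nblocks_set_X b : b != SX -> nblocks N t b = nblocks N s b.
Proof.
move=> b_bit; have not_b_s : exists j, sat s j != b.
  by case: (eqVneq c b) => [<- | neq_cb]; [exists (p + 1) | exists (nat_of_ord p); rewrite sat_p].
have not_b_t : exists j, sat t j != b.
  by exists (nat_of_ord p); rewrite sat_set_X modn_small // eqxx eq_sym.
rewrite (nblocks_run_starts size_set_X N_gt0 not_b_t).
by rewrite (nblocks_run_starts size_s N_gt0 not_b_s) run_starts_set_X.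
Qed.

Lemma cellular_set_X M : cellular N M s -> cellular N M t.
Proof. by case=> _ nb0 nb1 X_s; split; rewrite ?nblocks_set_X ?size_set_X ?X_cond_set_X. Qed.

End ReplaceByX.

Lemma str_lt_set_nth_X s p : p < size s -> is_bit (nth SX s p) ->
  str_lt s (set_nth SX s p SX).
Proof.
move=> lt_p p_bit; split.
- by rewrite size_set_nth; apply/esym/maxn_idPr.
- elim: s p lt_p p_bit => [|a s IH] [|p] //= lt_p p_bit; last by rewrite eqxx IH.
  rewrite p_bit eqxx orbT /=.
  by elim: s {IH lt_p} => //= b s ->; rewrite eqxx.
- apply: contraTneq p_bit => ->.
  by rewrite nth_set_nth /= eqxx.
Qed.

Lemma cellular_extend_bit N M s c : 0 < M -> cellular N M s -> c != SX ->
  M < #|occurrences N s c| -> exists2 t, cellular N M t & str_lt s t.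
Proof.
move=> M_gt0 cell_s c_bit lt_M; have [size_s _ _ _] := cell_s.
have : run_starts N s c \proper occurrences N s c.
  by rewrite properEcard run_starts_sub (card_run_starts_cellular M_gt0 cell_s c_bit).
case/properP => _ [j]; rewrite !inE => /eqP sat_j; rewrite sat_j eqxx negbK => /eqP pred_j.
have N_gt0 := ord_gt0 j.
have not_c : exists j : nat, sat s j != c.
  by have [j' not_c] := cellular_not_const c M_gt0 cell_s; exists j'.
have [|p [pred_p sat_p succ_p]] := exists_run_last_pair size_s N_gt0 not_c pred_j.
  by rewrite (sat_pred_addS size_s N_gt0 j 0) addn0.
exists (set_nth SX s p SX); first exact: cellular_set_X size_s c_bit pred_p sat_p succ_p _ cell_s.
have nth_p : nth SX s p = c by rewrite -sat_p /sat size_s modn_small.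
by apply: str_lt_set_nth_X; rewrite ?size_s // /is_bit nth_p.
Qed.

Lemma cellular_extend N M s : 0 < M -> cellular N M s -> dimension s + M.*2 < N ->
  exists2 t, cellular N M t & str_lt s t.
Proof.
move=> M_gt0 cell_s lt_dim; have [size_s _ _ _] := cell_s.
have := dimension_count_bits s; rewrite size_s !(count_occurrences _ size_s) => count_s.
case: (ltnP M #|occurrences N s Z0|) => [lt_M | le_M].
  exact: (cellular_extend_bit (c := Z0)) M_gt0 cell_s isT lt_M.
by apply: (cellular_extend_bit (c := Z1)) M_gt0 cell_s isT _; lia.
Qed.

Unset Implicit Arguments.

Theorem proposition3p2 (N M : nat) :
  0 < M -> M.*2 < N ->
  forall s : seq sym,
    maximal_in_Str N M s <-> (cellular N M s /\ dimension s = N - M.*2).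
Proof.
move=> M_gt0 _ s; split.
- move=> [cell_s maximal_s]; split => //.
  have := dimension_cellular M_gt0 cell_s; rewrite leq_eqVlt => /orP [/eqP <- | lt_dim].
    by rewrite addnK.
  by have [t cell_t /(maximal_s t cell_t)] := cellular_extend M_gt0 cell_s lt_dim.
- move=> [cell_s dim_s]; split => // t cell_t /dimension_str_lt.
  have := dimension_cellular M_gt0 cell_t; lia.
Qed.
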